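(* For every positive integer $n$, let $\mathrm{PF}_n(321)$ denote the set of parking functions $p=(p_1,\dots,p_n)$ of length $n$ that avoid $321$ as a word, i.e. for which there are no indices $i_1<i_2<i_3$ with $p_{i_1}>p_{i_2}>p_{i_3}$. Let $w_{n,n+1}(321)$ denote the number of words $w_1w_2\cdots w_n$ with all $w_i\in[n+1]$ for which there are no indices $i_1<i_2<i_3$ with $w_{i_1}>w_{i_2}>w_{i_3}$. Then \[|\mathrm{PF}_n(321)| = \frac{1}{n+1}\, w_{n,n+1}(321).\]
   Context: $[n]=\{1,2,\dots,n\}$. A tuple $p=(p_1,\dots,p_n)\in[n]^n$ is a parking function of length $n$ if its weakly increasing rearrangement $(p'_1,\dots,p'_n)$ satisfies $p'_i\le i$ for all $i\in[n]$. *)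

From mathcomp Require Import all_boot.
Set Implicit Arguments. Unset Strict Implicit. Unset Printing Implicit Defensive.

(* A word of length n over the alphabet [m] = {1,...,m} is encoded as
   w : {ffun 'I_n -> 'I_m}, where the letter w i : 'I_m with value k
   stands for the letter k+1 (shift by one; order is preserved). *)

Definition avoids321 (n m : nat) (w : {ffun 'I_n -> 'I_m}) : bool :=
  [forall i1 : 'I_n, forall i2 : 'I_n, forall i3 : 'I_n,
     ~~ [&& i1 < i2, i2 < i3, w i2 < w i1 & w i3 < w i2]].

(* Parking function of length n (values in [n], encoded 0-based):
   the weakly increasing rearrangement p' satisfies p'_i <= i for all i in [n]. *)
Definition is_parking (n : nat) (p : {ffun 'I_n -> 'I_n}) : bool :=
  let s := sort leq [seq nat_of_ord (p i) | i <- enum 'I_n] in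
  [forall i : 'I_n, nth 0 s i <= i].

Definition PF321 (n : nat) : {set {ffun 'I_n -> 'I_n}} :=
  [set p | is_parking p && avoids321 p].

Definition w321 (n m : nat) : nat := #|[set w : {ffun 'I_n -> 'I_m} | avoids321 w]|.

From mathcomp Require Import all_boot zify.
From Stdlib Require Import FunctionalExtensionality.
Set Implicit Arguments. Unset Strict Implicit. Unset Printing Implicit Defensive.

(* A word is built by inserting the copies of its letters in increasing order of
   the letters.  Whether inserting copies of a new largest letter into a
   321-avoider keeps it 321-avoiding, and the final weakly increasing run of the
   result, depend only on the length of the final run of the old word; so the
   insertion of [m] copies acts on functions of that length by an explicit
   operator [ins m], and these operators commute.  Hence the number of
   321-avoiding words with content [mu] (multiplicities of the letters) is
   symmetric in [mu].  A word of length [n] over [n+1] letters is a parking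
   function iff its content satisfies the prefix-sum inequalities, and by the
   cycle lemma exactly one of the [n+1] rotations of each content of sum [n]
   does; rotating contents therefore multiplies the count by [n+1]. *)

Lemma big_pred1_seq (R : Type) (idx : R) (op : Monoid.law idx) (I : eqType)
    (r : seq I) (i : I) (F : I -> R) :
  uniq r -> i \in r -> \big[op/idx]_(j <- r | j == i) F j = F i.
Proof. by move=> r_uniq ri; rewrite -big_filter filter_pred1_uniq // big_seq1. Qed.

(** * Operators on functions of the final run length *)

Definition addf (f g : nat -> nat) : nat -> nat := fun r => f r + g r.
Definition shiftf (f : nat -> nat) : nat -> nat := fun r => f r.+1.
Definition psum (f : nat -> nat) : nat -> nat := fun r => \sum_(1 <= d < r.+1) f d.

(* [ins m f r] sums [f] over the final weakly increasing runs of the 321-avoiders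
   obtained by inserting [m] copies of a new largest letter into a 321-avoider
   whose final weakly increasing run has length [r]: the first summand counts the
   words ending with the new letter, the second one the others. *)
Fixpoint ins (m : nat) (f : nat -> nat) : nat -> nat :=
  if m is m'.+1 then fun r => ins m' (shiftf f) r + iter m'.+1 psum f r else f.

Lemma addf_inj f g h : addf f h = addf g h -> f = g.
Proof.
move=> fg; apply: functional_extensionality => r.
by have := congr1 (fun F => F r) fg; rewrite /addf; lia.
Qed.

Lemma iter_psum_add m f g : iter m psum (addf f g) = addf (iter m psum f) (iter m psum g).
Proof.
elim: m => [|m IH] //=; rewrite IH.
by apply: functional_extensionality => r; rewrite /psum /addf big_split.
Qed.

Lemma ins_add m f g : ins m (addf f g) = addf (ins m f) (ins m g).
Proof.
elim: m f g => [|m IH] f g //=; apply: functional_extensionality => r.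
have -> : shiftf (addf f g) = addf (shiftf f) (shiftf g) by [].
have := congr1 (fun F => F r) (iter_psum_add m.+1 f g).
by rewrite IH /addf /=; lia.
Qed.

Lemma iter_psumS m f r : iter m.+1 psum f r.+1 = iter m.+1 psum f r + iter m psum f r.+1.
Proof. by rewrite /= /psum big_nat_recr. Qed.

Lemma shiftf_psum f : shiftf (psum f) = ins 1 f.
Proof.
apply: functional_extensionality => r.
by rewrite /= {1}/shiftf {1}/psum big_nat_recr //= addnC.
Qed.

Lemma ins1E f : ins 1 f = addf (shiftf f) (psum f).
Proof. by []. Qed.

Lemma ins_ins1_rec m f : addf (ins m.+2 f) (ins m (ins 1 f)) = ins m.+1 (ins 1 f).
Proof.
rewrite {2}ins1E ins_add; apply: functional_extensionality => r.
have iter_psumSr : iter m.+1 psum (psum f) = iter m.+2 psum f by rewrite -iterSr.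
rewrite /addf [ins m.+1 (psum f) r]/= shiftf_psum.
by move: iter_psumSr => /= ->; lia.
Qed.

(* [ins_ins1_rec] links three consecutive values of [m], so the inductions
   below carry two consecutive cases. *)
Lemma ins_ins1 m f : ins m (ins 1 f) = ins 1 (ins m f).
Proof.
suff: (forall f, ins m (ins 1 f) = ins 1 (ins m f)) /\
      (forall f, ins m.+1 (ins 1 f) = ins 1 (ins m.+1 f)) by case=> ->.
elim: m {f} => [|m [IH1 IH2]]; first by [].
split=> // g; apply: (@addf_inj _ _ (ins 1 (ins m (ins 1 g)))).
by rewrite -ins_add ins_ins1_rec -IH1 -IH2 ins_ins1_rec.
Qed.

Lemma insC a b f : ins a (ins b f) = ins b (ins a f).
Proof.
suff: (forall f, ins a (ins b f) = ins b (ins a f)) /\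
      (forall f, ins a.+1 (ins b f) = ins b (ins a.+1 f)) by case=> ->.
elim: a {f} => [|a [IH1 IH2]]; first by split=> // g; rewrite ins_ins1.
split=> // g; apply: (@addf_inj _ _ (ins a (ins 1 (ins b g)))).
by rewrite ins_ins1_rec -ins_ins1 IH2 IH1 -ins_add ins_ins1_rec.
Qed.

(** * Words over [0, K) and the pattern 321 *)

Fixpoint words (K N : nat) : seq (seq nat) :=
  if N is N'.+1 then [seq x :: w | x <- iota 0 K, w <- words K N'] else [:: [::]].

Lemma mem_words K N v : (v \in words K N) = (size v == N) && all (fun x => x < K) v.
Proof.
elim: N v => [|N IH] [|x v] //=; first by apply/allpairsP => -[[y w]] /= [].
rewrite eqSS; apply/allpairsP/idP => [[[y w]] /= [] + + [-> ->]|].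
  by rewrite IH mem_iota /= => -> /andP[-> ->].
case/andP=> v_size /andP[x_lt v_bd]; exists (x, v) => /=.
by rewrite mem_iota IH v_size v_bd.
Qed.

Lemma words_size K N v : v \in words K N -> size v = N.
Proof. by rewrite mem_words => /andP[/eqP]. Qed.

Lemma words_bounded K N v : v \in words K N -> all (fun x => x < K) v.
Proof. by rewrite mem_words => /andP[]. Qed.

Lemma uniq_words K N : uniq (words K N).
Proof.
elim: N => [|N IH] //=; apply: allpairs_uniq => //; first exact: iota_uniq.
by move=> [x1 w1] [x2 w2] _ _ /= [-> ->].
Qed.

Lemma big_words_cons K N (F : seq nat -> nat) :
  \sum_(v <- words K N.+1) F v = \sum_(x <- iota 0 K) \sum_(w <- words K N) F (x :: w).
Proof. exact: big_allpairs_dep. Qed.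

Lemma perm_words_rcons K N :
  perm_eq (words K N.+1) [seq rcons w x | w <- words K N, x <- iota 0 K].
Proof.
apply: uniq_perm; first exact: uniq_words.
  apply: allpairs_uniq; [exact: uniq_words|exact: iota_uniq|].
  by move=> [x1 w1] [x2 w2] _ _ /= /rcons_inj [-> ->].
move=> v; rewrite mem_words; apply/idP/allpairsP.
  case/lastP: v => [|v x] //; rewrite size_rcons all_rcons eqSS.
  case/andP=> v_size /andP[x_lt v_bd]; exists (v, x).
  by rewrite /= mem_words v_size v_bd mem_iota.
move=> [[w x]] /= [+ + ->]; rewrite mem_words mem_iota size_rcons all_rcons eqSS.
by case/andP=> -> -> /= ->.
Qed.

Lemma big_words_rcons K N (F : seq nat -> nat) :
  \sum_(v <- words K N.+1) F v = \sum_(w <- words K N) \sum_(x <- iota 0 K) F (rcons w x).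
Proof. by rewrite (perm_big _ (perm_words_rcons K N)) big_allpairs_dep. Qed.

Lemma perm_words_rot K N j : perm_eq (map (rot j) (words K N)) (words K N).
Proof.
apply: uniq_perm; [by rewrite map_inj_uniq ?uniq_words //; apply: rot_inj|exact: uniq_words|].
move=> v; apply/mapP/idP => [[mu + ->]|v_words].
  by rewrite !mem_words size_rot (eq_all_r (mem_rot j mu)).
exists (rotr j v); rewrite ?rotrK //.
by rewrite mem_words size_rotr (eq_all_r (mem_rotr j v)) -mem_words.
Qed.

Definition has321 (s : seq nat) : bool :=
  has (fun a => has (fun b => has (fun c =>
    [&& b < a, c < b & subseq [:: a; b; c] s]) s) s) s.

Lemma has321P s :
  reflect (exists a b c, [/\ b < a, c < b & subseq [:: a; b; c] s]) (has321 s).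
Proof.
apply: (iffP idP); first by case/hasP=> a _ /hasP[b _ /hasP[c _ /and3P[]]]; exists a, b, c.
case=> a [b [c [ba cb abc]]]; have sub := mem_subseq abc.
apply/hasP; exists a; first by rewrite sub ?inE ?eqxx.
apply/hasP; exists b; first by rewrite sub ?inE ?eqxx ?orbT.
by apply/hasP; exists c; rewrite ?ba ?cb ?abc // sub ?inE ?eqxx ?orbT.
Qed.

Lemma has321_subseq s t : subseq s t -> has321 s -> has321 t.
Proof.
move=> st /has321P[a [b [c [ba cb abc]]]]; apply/has321P.
by exists a, b, c; split=> //; apply: subseq_trans abc st.
Qed.

Lemma sorted_subseq2 s b c : sorted leq s -> subseq [:: b; c] s -> b <= c.
Proof. by move=> s_sorted /subseq_sorted-/(_ _ leq_trans s_sorted) /=; rewrite andbT. Qed.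

Lemma unsorted_subseq2 s : ~~ sorted leq s -> exists b c, c < b /\ subseq [:: b; c] s.
Proof.
elim: s => [|x [|y t] IH] //=; case: (leqP x y) => [_ /IH[b [c [cb sub]]]|yx _].
  by exists b, c; split=> //; apply: subseq_trans sub (subseq_cons _ _).
by exists x, y; rewrite !eqxx sub0seq.
Qed.

Lemma sorted_leq_last s x y : sorted leq (x :: s) -> y \in x :: s -> y <= last x s.
Proof.
elim: s x y => [|z t IH] x y /=; first by rewrite inE => _ /eqP ->.
case/andP=> xz zt; rewrite inE => /orP[/eqP ->|yt]; last exact: IH.
exact: leq_trans xz (IH _ _ zt (mem_head _ _)).
Qed.

Fixpoint last_run (s : seq nat) : nat :=
  if s is y :: v then (if sorted leq (y :: v) then (size v).+1 else last_run v) else 0.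

Lemma last_run_sorted s : sorted leq s -> last_run s = size s.
Proof. by case: s => [|y v] //= ->. Qed.

Lemma last_run_unsorted y w : ~~ sorted leq (y :: w) -> last_run (y :: w) = last_run w.
Proof. by move=> /= /negbTE ->. Qed.

Lemma last_run_rcons v k : all (fun x => x <= k) v -> last_run (rcons v k) = (last_run v).+1.
Proof.
elim: v => [|y v IH] //= /andP[yk vk]; rewrite rcons_path size_rcons IH //.
case: (path leq y v) => //=.
have yv_bd : all (fun x => x <= k) (y :: v) by rewrite /= yk.
by rewrite (allP yv_bd _ (mem_last y v)).
Qed.

Lemma last_run_cons_descent y w x : x \in w -> x < y -> last_run (y :: w) = last_run w.
Proof.
move=> xw xy; apply: last_run_unsorted; apply/negP => /(order_path_min leq_trans).
by move/allP/(_ x xw); rewrite leqNgt xy.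
Qed.

Lemma last_run_cons_last x w y : y \in w -> last x w < y -> last_run (x :: w) = last_run w.
Proof.
move=> yw lt_last; apply: last_run_unsorted; apply/negP => /sorted_leq_last.
by move=> /(_ y); rewrite inE yw orbT leqNgt lt_last => /(_ isT).
Qed.

(** * Inserting copies of a new largest letter *)

Section Insertion.

Variable k : nat.

(* Meant for [v] over [0, k]: letters above [k] are not constrained. *)
Definition is_insertion (u : seq nat) (m : nat) (v : seq nat) : bool :=
  (filter (fun x => x < k) v == u) && (count_mem k v == m).

Lemma is_insertion0 u w : all (fun x => x < k.+1) w -> all (fun x => x < k) u ->
  is_insertion u 0 w = (w == u).
Proof.
move=> w_bd u_bd; rewrite /is_insertion; apply/idP/eqP => [|->].
  case/andP=> /eqP <- /eqP/count_memPn kNw; apply/esym/all_filterP/allP => x xw.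
  by rewrite ltn_neqAle -ltnS (allP w_bd) // andbT; apply: contraNneq kNw => <-.
rewrite (all_filterP u_bd) eqxx; apply/eqP/count_memPn.
by apply/negP => /(allP u_bd); rewrite ltnn.
Qed.

Lemma is_insertionS_neq0 u m w : is_insertion u m.+1 w -> w != [::].
Proof. by case: w => // /andP[_ /eqP]. Qed.

Lemma is_insertion_rcons_max u m w : is_insertion u m.+1 (rcons w k) = is_insertion u m w.
Proof. by rewrite /is_insertion filter_rcons ltnn -cats1 count_cat /= eqxx addn1 eqSS. Qed.

Lemma is_insertion_cons_max u m w : is_insertion u m.+1 (k :: w) = is_insertion u m w.
Proof. by rewrite /is_insertion /= ltnn eqxx add1n eqSS. Qed.

Lemma is_insertion0_cons_max u w : is_insertion u 0 (k :: w) = false.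
Proof. by rewrite /is_insertion /= eqxx andbF. Qed.

Lemma is_insertion_cons_lt x u m y w : y < k ->
  is_insertion (x :: u) m (y :: w) = (y == x) && is_insertion u m w.
Proof.
move=> yk; rewrite /is_insertion /= yk eqseq_cons -andbA; congr (_ && _).
by rewrite (ltn_eqF yk).
Qed.

Lemma sum_insertion_cons x u m (G : seq nat -> nat) : x < k ->
  \sum_(v <- words k.+1 (size (x :: u) + m) | is_insertion (x :: u) m v) G v =
  \sum_(w <- words k.+1 (size u + m) | is_insertion u m w) G (x :: w) +
  (if m is m'.+1 then
     \sum_(w <- words k.+1 (size (x :: u) + m') | is_insertion (x :: u) m' w) G (k :: w)
   else 0).
Proof.
move=> xk; rewrite addSn big_mkcond big_words_cons.
set A := \sum_(w <- words k.+1 (size u + m) | is_insertion u m w) G (x :: w).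
set B := if m is _.+1 then _ else _.
rewrite (eq_big_seq (fun y => (if y == x then A else 0) + (if y == k then B else 0))).
  by rewrite big_split -!big_mkcond !big_pred1_seq ?iota_uniq ?mem_iota //= ltnW.
move=> y; rewrite mem_iota add0n ltnS => /andP[_]; rewrite leq_eqVlt => /orP[/eqP->|yk].
  rewrite eqxx (gtn_eqF xk) add0n /B; case: m {A B} => [|m].
    by rewrite big1 // => w _; rewrite is_insertion0_cons_max.
  rewrite -addSnnS [RHS]big_mkcond.
  by apply: eq_bigr => w _; rewrite is_insertion_cons_max.
rewrite (ltn_eqF yk) addn0 /A; case: eqVneq => [->|yx].
  by rewrite [RHS]big_mkcond; apply: eq_bigr => w _; rewrite is_insertion_cons_lt // eqxx.
by rewrite big1 // => w _; rewrite is_insertion_cons_lt // (negbTE yx).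
Qed.

Definition inner_insertions_sum (u : seq nat) (m : nat) (f : nat -> nat) : nat :=
  \sum_(v <- words k.+1 (size u + m) | is_insertion u m v && (last k.+1 v != k)) f (last_run v).

Lemma sum_insertions_rcons u m f :
  \sum_(v <- words k.+1 (size u + m.+1) | is_insertion u m.+1 v) f (last_run v) =
  \sum_(w <- words k.+1 (size u + m) | is_insertion u m w) f (last_run w).+1 +
  inner_insertions_sum u m.+1 f.
Proof.
rewrite /inner_insertions_sum (bigID (fun v => last k.+1 v == k)) /=; congr (_ + _).
rewrite addnS big_mkcond big_words_rcons [RHS]big_mkcond; apply: eq_big_seq => w wk.
rewrite (eq_bigr (fun x => if x == k then
    (if is_insertion u m.+1 (rcons w x) then f (last_run (rcons w x)) else 0) else 0)).
  rewrite -big_mkcond big_pred1_seq ?iota_uniq ?mem_iota //= is_insertion_rcons_max.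
  by rewrite last_run_rcons //; apply: words_bounded wk.
by move=> x _; rewrite last_rcons; case: eqP; rewrite ?andbT ?andbF.
Qed.

Lemma sum_insertions0 u (G : seq nat -> nat) : all (fun y => y < k) u ->
  \sum_(v <- words k.+1 (size u + 0) | is_insertion u 0 v) G v = G u.
Proof.
move=> u_bd; have u_words : u \in words k.+1 (size u + 0).
  by rewrite mem_words addn0 eqxx; apply: sub_all u_bd => y /ltnW.
rewrite big_seq_cond (eq_bigl (fun v => v == u)) ?big_pred1_seq ?uniq_words // => v.
case: (boolP (v \in _)) => [/words_bounded vk|]; first by rewrite is_insertion0.
by move=> vNk; apply/esym/eqP => v_eq; rewrite v_eq u_words in vNk.
Qed.

Lemma inner_insertions_sum_nil m f : inner_insertions_sum [::] m.+1 f = 0.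
Proof.
rewrite /inner_insertions_sum big1_seq // => -[|y v] /andP[/andP[ins_v last_v] yvk] //.
case/negP: last_v; case/andP: ins_v => /eqP no_small _.
have /(allP (words_bounded yvk)) : last y v \in y :: v := mem_last y v.
rewrite ltnS leq_eqVlt => /orP[//|small_last].
have : last y v \in filter (fun x => x < k) (y :: v) by rewrite mem_filter small_last mem_last.
by rewrite no_small.
Qed.

Lemma inner_insertions_sum_cons x s m f :
  x < k -> sorted leq (x :: s) -> all (fun y => y < k) s ->
  inner_insertions_sum (x :: s) m.+1 f =
  inner_insertions_sum s m.+1 f +
  (if m is m'.+1 then inner_insertions_sum (x :: s) m f else f (size s).+1).
Proof.
move=> xk xs_sorted s_bd; rewrite /inner_insertions_sum big_mkcondr sum_insertion_cons //.
congr (_ + _).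
  rewrite [RHS]big_mkcondr big_seq_cond [RHS]big_seq_cond; apply: eq_bigr => w /andP[wk ins_w].
  have lastE : last k.+1 w = last x w by case: w {wk} ins_w => // /is_insertionS_neq0.
  rewrite lastE -[last k.+1 (x :: w)]/(last x w).
  case: eqVneq => // last_neq; rewrite (@last_run_cons_last x w k) //.
    by move: ins_w => /andP[_ /eqP km]; rewrite -has_pred1 has_count km.
  rewrite ltn_neqAle last_neq -ltnS.
  have := mem_last x w; rewrite inE => /orP[/eqP ->|]; first by rewrite ltnS ltnW.
  exact: (allP (words_bounded wk)).
rewrite (eq_bigr (fun w => if last k.+1 w != k then f (last_run w) else 0)); last first.
  move=> w /andP[/eqP small_w _].
  have : x \in filter (fun y => y < k) w by rewrite small_w mem_head.
  rewrite mem_filter => /andP[_ xw].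
  have lastE : last k w = last k.+1 w by case: w {small_w} xw.
  by rewrite -[last k.+1 (k :: w)]/(last k w) lastE (last_run_cons_descent xw xk).
case: m => [|m]; last by rewrite [RHS]big_mkcondr.
have xs_bd : all (fun y => y < k) (x :: s) by rewrite /= xk.
rewrite sum_insertions0 // -[last _ _]/(last x s) last_run_sorted //.
by rewrite neq_ltn (allP xs_bd _ (mem_last x s)).
Qed.

Lemma inner_insertions_sum_sorted s m f : sorted leq s -> all (fun y => y < k) s ->
  inner_insertions_sum s m.+1 f = iter m.+1 psum f (size s).
Proof.
elim: s m => [|x s IH] m s_sorted; first by rewrite inner_insertions_sum_nil /= /psum big_geq.
case/andP=> xk s_bd; have s_sorted' := path_sorted s_sorted.
elim: m => [|m IHm]; rewrite inner_insertions_sum_cons // IH //.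
  exact: esym (iter_psumS 0 f (size s)).
by rewrite IHm; exact: esym (iter_psumS m.+1 f (size s)).
Qed.

Lemma sum_insertions_sorted u m f : sorted leq u -> all (fun y => y < k) u ->
  \sum_(v <- words k.+1 (size u + m) | is_insertion u m v) f (last_run v) = ins m f (size u).
Proof.
move=> u_sorted u_bd; elim: m f => [|m IH] f; first by rewrite sum_insertions0 ?last_run_sorted.
by rewrite sum_insertions_rcons inner_insertions_sum_sorted // (IH (shiftf f)).
Qed.

Lemma insertion_sorted_avoids321 u m v : sorted leq u -> all (fun x => x < k.+1) v ->
  is_insertion u m v -> ~~ has321 v.
Proof.
move=> u_sorted v_bd /andP[/eqP small_v _]; apply/has321P => -[a [b [c [ba cb abc]]]].
have ak : a < k.+1 by apply: (allP v_bd); apply: (mem_subseq abc); rewrite mem_head.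
have : subseq [:: b; c] u.
  by rewrite -small_v subseq_filter (cons_subseq abc) /= !andbT; apply/andP; split; lia.
by move/(sorted_subseq2 u_sorted); rewrite leqNgt cb.
Qed.

Lemma has321_cons_insertion x u w : x < k -> ~~ has321 (x :: u) ->
  filter (fun y => y < k) w = u -> has321 (x :: w) = has321 w.
Proof.
move=> xk xu_av small_w; apply/idP/idP; last exact/has321_subseq/subseq_cons.
case/has321P=> a [b [c [ba cb]]] /=; case: eqP => [ax bc|_ abc]; last first.
  by apply/has321P; exists a, b, c.
rewrite ax in ba; case/has321P: xu_av; exists x, b, c; split=> //=; rewrite eqxx -small_w.
by rewrite subseq_filter bc /= !andbT; apply/andP; split; lia.
Qed.

Lemma has321_cons_max_insertion u w : ~~ sorted leq u -> all (fun y => y < k) u ->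
  filter (fun y => y < k) w = u -> has321 (k :: w).
Proof.
move=> /unsorted_subseq2[b [c [cb bc]]] u_bd small_w; apply/has321P; exists k, b, c.
split=> //; first by apply: (allP u_bd); apply: (mem_subseq bc); rewrite mem_head.
by rewrite /= eqxx; apply: subseq_trans bc _; rewrite -small_w filter_subseq.
Qed.

Lemma sum_avoiding_insertions_sorted u m f : sorted leq u -> all (fun y => y < k) u ->
  \sum_(v <- words k.+1 (size u + m) | is_insertion u m v && ~~ has321 v) f (last_run v) =
  ins m f (last_run u).
Proof.
move=> u_sorted u_bd; rewrite last_run_sorted // -sum_insertions_sorted //.
rewrite big_seq_cond [RHS]big_seq_cond; apply: eq_bigl => v.
case: (boolP (v \in _)) => //= /words_bounded v_bd; case: (boolP (is_insertion _ _ _)) => //=.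
exact: insertion_sorted_avoids321.
Qed.

Lemma sum_avoiding_insertions_unsorted_cons x u m f : x < k -> ~~ sorted leq (x :: u) ->
  ~~ has321 (x :: u) -> all (fun y => y < k) u ->
  \sum_(v <- words k.+1 (size (x :: u) + m) | is_insertion (x :: u) m v && ~~ has321 v)
    f (last_run v) =
  \sum_(w <- words k.+1 (size u + m) | is_insertion u m w && ~~ has321 w) f (last_run w).
Proof.
move=> xk xu_unsorted xu_av u_bd; rewrite big_mkcondr sum_insertion_cons //.
have xu_bd : all (fun y => y < k) (x :: u) by rewrite /= xk.
rewrite [X in _ + X](_ : _ = 0); last first.
  case: m => // m; rewrite big1 // => w /andP[/eqP small_w _].
  by rewrite (has321_cons_max_insertion xu_unsorted xu_bd small_w).
rewrite addn0 [RHS]big_mkcondr; apply: eq_bigr => w /andP[/eqP small_w _].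
rewrite (has321_cons_insertion xk xu_av small_w); case: ifP => // _.
rewrite last_run_unsorted //; apply: contra xu_unsorted => /(sorted_filter leq_trans).
by move/(_ (fun y => y < k)); rewrite /= xk small_w.
Qed.

Lemma sum_avoiding_insertions u m f : ~~ has321 u -> all (fun y => y < k) u ->
  \sum_(v <- words k.+1 (size u + m) | is_insertion u m v && ~~ has321 v) f (last_run v) =
  ins m f (last_run u).
Proof.
elim: u => [|x u IH] u_av u_bd; first exact: sum_avoiding_insertions_sorted.
have [xu_sorted|xu_unsorted] := boolP (sorted leq (x :: u)).
  exact: sum_avoiding_insertions_sorted.
have /andP[xk u_bd'] := u_bd.
rewrite sum_avoiding_insertions_unsorted_cons // last_run_unsorted // IH //.
by apply: contra u_av; apply/has321_subseq/subseq_cons.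
Qed.

End Insertion.

(** * Counting 321-avoiders by content *)

Definition content (k L : nat) (w : seq nat) : seq nat :=
  [seq count_mem (k + i) w | i <- iota 0 L].

Definition ins_seq (mu : seq nat) : nat -> nat := foldr ins (fun _ => 1) mu.

Lemma content_cons k L w : content k L.+1 w = count_mem k w :: content k.+1 L w.
Proof.
rewrite /content /= addn0 (iotaDl 1 0) -map_comp; congr cons.
by apply: eq_map => i /=; rewrite add1n addSnnS.
Qed.

Lemma count_ltnS k w :
  count (fun x => x < k.+1) w = count (fun x => x < k) w + count_mem k w.
Proof. by elim: w => //= y w ->; rewrite ltnS leq_eqVlt eq_sym; case: ltngtP; lia. Qed.

Lemma sumn_content t w : sumn (content 0 t w) = count (fun x => x < t) w.
Proof.
elim: t => [|t IH]; first by rewrite /content /= count_pred0.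
rewrite /content -addn1 iotaD map_cat sumn_cat -/(content 0 t w) IH /= add0n addn0.
by rewrite addn1 count_ltnS.
Qed.

Lemma partition_big_seq (R : Type) (idx : R) (op : Monoid.com_law idx) (I J : eqType)
    (r : seq I) (s : seq J) (g : I -> J) (P : pred I) (F : I -> R) :
  uniq s -> {in r, forall i, P i -> g i \in s} ->
  \big[op/idx]_(i <- r | P i) F i =
  \big[op/idx]_(j <- s) \big[op/idx]_(i <- r | P i && (g i == j)) F i.
Proof.
move=> s_uniq gs; rewrite -(exchange_big_dep predT) //= big_seq_cond [RHS]big_seq_cond.
apply: eq_bigr => i /andP[ri Pi].
by rewrite (eq_bigl (fun j => j == g i)) ?big_pred1_seq ?gs // => j; rewrite eq_sym.
Qed.

Lemma filter_lt_ltnS k w :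
  filter (fun y => y < k) (filter (fun y => y < k.+1) w) = filter (fun y => y < k) w.
Proof.
rewrite -filter_predI; apply: eq_filter => y /=.
by case: (ltnP y k) => // yk; rewrite ltnS ltnW.
Qed.

Lemma count_mem_filter_ltnS k w : count_mem k (filter (fun y => y < k.+1) w) = count_mem k w.
Proof. by rewrite count_filter; apply: eq_count => y /=; case: eqP => // ->; rewrite ltnSn. Qed.

Lemma sum_avoiders_extending mu k u : all (fun y => y < k) u -> ~~ has321 u ->
  \sum_(w <- words (k + size mu) (size u + sumn mu) |
     [&& filter (fun y => y < k) w == u, content k (size mu) w == mu & ~~ has321 w]) 1 =
  ins_seq mu (last_run u).
Proof.
elim: mu k u => [|m mu IH] k u u_bd u_av.
  rewrite /= !addn0 big_seq_cond (eq_bigl (fun w => w == u)) ?big_pred1_seq ?uniq_words //.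
    by rewrite mem_words eqxx.
  move=> w; case: (boolP (w \in _)) => [/words_bounded w_bd|wNk] /=.
    by rewrite (all_filterP w_bd); case: eqP => // ->.
  by apply/esym/eqP => w_eq; rewrite w_eq mem_words eqxx u_bd in wNk.
rewrite /= addnS -addSn addnA (@partition_big_seq _ _ _ _ _ _ _ (filter (fun y => y < k.+1)) _ _
  (uniq_words k.+1 (size u + m))); last first.
  move=> w _ /and3P[/eqP small_w]; rewrite content_cons eqseq_cons => /andP[/eqP km _] _.
  by rewrite mem_words filter_all andbT size_filter count_ltnS -size_filter small_w km.
rewrite -(sum_avoiding_insertions m (ins_seq mu) u_av u_bd) [RHS]big_mkcond.
apply: eq_big_seq => u' u'k; have u'_bd := words_bounded u'k.
case: (boolP (is_insertion k u m u' && ~~ has321 u')) => [/andP[ins_u' u'_av]|not_ins].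
  rewrite -(IH k.+1 u' u'_bd u'_av) (words_size u'k); apply: eq_bigl => w.
  case: (eqVneq (filter (fun y => y < k.+1) w) u') => [small_w|]; last by rewrite !andbF.
  rewrite content_cons eqseq_cons -filter_lt_ltnS -(count_mem_filter_ltnS k w) small_w.
  by case/andP: ins_u' => /eqP -> /eqP ->; rewrite !eqxx /= andbT.
rewrite big1 // => w /andP[/and3P[/eqP small_w]]; rewrite content_cons eqseq_cons.
case/andP=> /eqP km _ w_av /eqP small_w'; move: not_ins.
rewrite /is_insertion -small_w' filter_lt_ltnS count_mem_filter_ltnS small_w km !eqxx /=.
by rewrite (contra (has321_subseq (filter_subseq _ _)) w_av).
Qed.

Lemma ins_seq_rcons mu m : ins_seq (rcons mu m) = ins_seq (m :: mu).
Proof. by elim: mu => [|n mu IH] //=; rewrite IH /= insC. Qed.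

Lemma ins_seq_catC s t : ins_seq (s ++ t) = ins_seq (t ++ s).
Proof.
elim: s t => [|x s IH] t; first by rewrite cats0.
by rewrite cat_cons -ins_seq_rcons rcons_cat IH cat_rcons.
Qed.

Lemma ins_seq_rot j mu : ins_seq (rot j mu) = ins_seq mu.
Proof. by rewrite /rot ins_seq_catC cat_take_drop. Qed.

Lemma sum_avoiders_by_content K N (Q : pred (seq nat)) :
  \sum_(v <- words K N | Q (content 0 K v) && ~~ has321 v) 1 =
  \sum_(mu <- words N.+1 K | (sumn mu == N) && Q mu) ins_seq mu 0.
Proof.
rewrite (@partition_big_seq _ _ _ _ _ _ _ (content 0 K) _ _ (uniq_words N.+1 K)); last first.
  move=> v /words_size v_size _; rewrite mem_words size_map size_iota eqxx /=.
  by apply/allP => c /mapP[i _ ->]; rewrite ltnS -v_size count_size.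
rewrite [RHS]big_mkcond; apply: eq_big_seq => mu /words_size mu_size.
case: (boolP ((sumn mu == N) && Q mu)) => [/andP[/eqP mu_sum Qmu]|].
  have := @sum_avoiders_extending mu 0 [::] isT isT; rewrite !add0n mu_size mu_sum => <-.
  apply: eq_bigl => w; rewrite /= filter_pred0.
  by case: eqP => [->|_]; rewrite ?Qmu ?andbF ?andbT.
move=> not_mu; rewrite big1_seq // => v /andP[/andP[/andP[Qv _] /eqP cv] vk].
case/negP: not_mu; rewrite -cv Qv andbT sumn_content -(words_size vk) -all_count.
exact: words_bounded vk.
Qed.

(** * The cycle lemma *)

Definition parking_content (mu : seq nat) : bool :=
  all (fun i => i.+1 <= sumn (take i.+1 mu)) (iota 0 (size mu).-1).

Lemma parking_contentP mu :
  reflect (forall t, 0 < t < size mu -> t <= sumn (take t mu)) (parking_content mu).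
Proof.
apply: (iffP allP) => [pk [|t] // /andP[_ t_lt]|pk i]; last first.
  by rewrite mem_iota => /andP[_ i_lt]; apply: pk; lia.
by apply: pk; rewrite mem_iota; lia.
Qed.

Lemma sumn_take_rot mu j t : j <= size mu -> t <= size mu ->
  sumn (take t (rot j mu)) + sumn (take j mu) =
  if j + t < size mu then sumn (take (j + t) mu)
  else sumn mu + sumn (take (j + t - size mu) mu).
Proof.
move=> j_le t_le; rewrite /rot take_cat size_drop.
have mu_sum : sumn mu = sumn (take j mu) + sumn (drop j mu) by rewrite -sumn_cat cat_take_drop.
case: ltnP => [t_lt|t_ge]; first by rewrite ifT ?takeD ?sumn_cat 1?addnC //; lia.
rewrite ifF; last by lia.
rewrite take_takel; last by lia.
have -> : t - (size mu - j) = j + t - size mu by lia.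
by rewrite sumn_cat mu_sum; lia.
Qed.

(* [j] is the leftmost minimum of [i |-> sumn (take i mu) - i] on [0, size mu),
   stated without subtraction. *)
Definition leftmost_min (mu : seq nat) (j : nat) : Prop :=
  (forall q, q < j -> sumn (take j mu) + q < sumn (take q mu) + j) /\
  (forall p, j < p < size mu -> sumn (take j mu) + p <= sumn (take p mu) + j).

Lemma parking_content_rot mu j : size mu = (sumn mu).+1 -> j < size mu ->
  parking_content (rot j mu) <-> leftmost_min mu j.
Proof.
move=> mu_size j_lt; have S0 : sumn (take 0 mu) = 0 by rewrite take0.
have key t := @sumn_take_rot mu j t (ltnW j_lt).
split=> [/parking_contentP pk_rot|[left_lt right_le]]; last first.
  apply/parking_contentP => t; rewrite size_rot => /andP[t_pos t_lt].
  move: (key t (ltnW t_lt)); case: ltnP => [jt_lt|jt_ge] sum_rot.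
    by have := right_le (j + t); lia.
  by have := left_lt (j + t - size mu); lia.
split=> [q q_lt|p /andP[jp p_lt]].
  have t_lt : q + size mu - j < size mu by lia.
  move: (key _ (ltnW t_lt)) (pk_rot (q + size mu - j)); rewrite size_rot ifF; last by lia.
  have -> : j + (q + size mu - j) - size mu = q by lia.
  by move=> sum_rot /(_ ltac:(lia)); lia.
move: (key (p - j) ltac:(lia)) (pk_rot (p - j)); rewrite size_rot ifT; last by lia.
have -> : j + (p - j) = p by lia.
by move=> sum_rot /(_ ltac:(lia)); lia.
Qed.

Lemma exists_leftmost_argmin (f : nat -> nat) n : exists2 j, j <= n &
  (forall q, q < j -> f j < f q) /\ (forall p, p <= n -> f j <= f p).
Proof.
case: (@arg_minnP _ ord0 predT (fun i : 'I_n.+1 => f i) isT) => i0 _ i0_min.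
have ex_min : exists i, f i == f i0 by exists i0.
case: (ex_minnP ex_min) => j /eqP fj j_least.
have j_le : j <= n by rewrite -ltnS (leq_ltn_trans (j_least i0 (eqxx _))).
exists j => //; split=> [q q_lt|p p_le]; last by rewrite fj (i0_min (@Ordinal n.+1 p p_le)).
have q_le : q < n.+1 by lia.
have := i0_min (Ordinal q_le) isT; rewrite fj leq_eqVlt => /orP[/eqP fq|//].
by have := j_least q; rewrite /= -fq eqxx => /(_ isT); lia.
Qed.

Lemma sum_parking_rot mu n : size mu = n.+1 -> sumn mu = n ->
  \sum_(j < n.+1) parking_content (rot j mu) = 1.
Proof.
move=> mu_size mu_sum; have size_sum : size mu = (sumn mu).+1 by rewrite mu_size mu_sum.
have [j j_le [left_lt right_le]] :=
  exists_leftmost_argmin (fun i => sumn (take i mu) + (size mu - i)) n.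
have j_lt : j < n.+1 by [].
have j_min : leftmost_min mu j.
  split=> [q q_lt|p /andP[jp p_lt]]; first by have := left_lt q q_lt; lia.
  by have := right_le p ltac:(lia); lia.
have min_uniq i : i < n.+1 -> leftmost_min mu i -> i = j.
  case: j_min => [j_left j_right] i_lt [i_left i_right].
  case: (ltngtP i j) => // [ij|ji]; first by have := j_left i ij; have := i_right j; lia.
  by have := i_left j ji; have := j_right i; lia.
rewrite (bigD1 (Ordinal j_lt)) //= big1 => [|i /eqP i_neq].
  by move/(parking_content_rot size_sum): j_min; rewrite mu_size => ->.
apply/eqP; rewrite eqb0; apply/negP => /(parking_content_rot size_sum).
rewrite mu_size => /(_ (ltn_ord i))/(min_uniq _ (ltn_ord i)) i_j.
by apply: i_neq; apply: val_inj.
Qed.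

Lemma sum_rot_invariant_parking (F : seq nat -> nat) n :
  (forall j mu, F (rot j mu) = F mu) ->
  \sum_(mu <- words n.+1 n.+1 | sumn mu == n) F mu =
  n.+1 * \sum_(mu <- words n.+1 n.+1 | (sumn mu == n) && parking_content mu) F mu.
Proof.
move=> F_rot; set L := words n.+1 n.+1.
transitivity (\sum_(mu <- L | sumn mu == n) \sum_(j < n.+1) parking_content (rot j mu) * F mu).
  rewrite big_seq_cond [RHS]big_seq_cond; apply: eq_bigr => mu /andP[mu_words /eqP mu_sum].
  by rewrite -big_distrl /= (sum_parking_rot (words_size mu_words)) ?mul1n.
rewrite exchange_big /=.
rewrite (eq_bigr (fun=> \sum_(mu <- L | sumn mu == n) parking_content mu * F mu)).
  rewrite sum_nat_const card_ord big_mkcondr; congr (_ * _).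
  by apply: eq_bigr => mu _; case: (parking_content mu); rewrite ?mul1n.
move=> j _; rewrite -[RHS](perm_big _ (perm_words_rot n.+1 n.+1 j)) big_map.
by apply: eq_big => [mu|mu _]; rewrite ?sumn_rot ?F_rot.
Qed.

(** * Parking functions and words as finite functions *)

Definition wordseq n K (w : {ffun 'I_n -> 'I_K}) : seq nat :=
  [seq nat_of_ord (w i) | i <- enum 'I_n].

Lemma size_wordseq n K (w : {ffun 'I_n -> 'I_K}) : size (wordseq w) = n.
Proof. by rewrite size_map size_enum_ord. Qed.

Lemma nth_wordseq n K (w : {ffun 'I_n -> 'I_K}) (i : 'I_n) : nth 0 (wordseq w) i = w i.
Proof. by rewrite (nth_map i) ?size_enum_ord // nth_ord_enum. Qed.

Lemma wordseq_inj n K : injective (@wordseq n K).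
Proof. by move=> w1 w2 w12; apply/ffunP => i; apply: val_inj; rewrite /= -!nth_wordseq w12. Qed.

Lemma perm_wordseq_words n k :
  perm_eq (map (@wordseq n k.+1) (enum {ffun 'I_n -> 'I_k.+1})) (words k.+1 n).
Proof.
apply: uniq_perm; first by rewrite map_inj_uniq ?enum_uniq //; apply: wordseq_inj.
  exact: uniq_words.
move=> v; rewrite mem_words; apply/mapP/idP => [[w _ ->]|/andP[/eqP v_size v_bd]].
  by rewrite size_wordseq eqxx; apply/allP => x /mapP[i _ ->].
exists [ffun i : 'I_n => inord (nth 0 v i) : 'I_k.+1]; first by rewrite mem_enum.
apply: (@eq_from_nth _ 0) => [|i]; rewrite ?size_wordseq // v_size => i_lt.
rewrite (nth_wordseq _ (Ordinal i_lt)) ffunE inordK //.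
by apply: (allP v_bd); rewrite mem_nth ?v_size.
Qed.

Lemma card_ffun_words n k (Q : pred (seq nat)) :
  #|[set w : {ffun 'I_n -> 'I_k.+1} | Q (wordseq w)]| = \sum_(v <- words k.+1 n | Q v) 1.
Proof.
rewrite -sum1_card -(perm_big _ (perm_wordseq_words n k)) big_map big_enum_cond /=.
by apply: eq_bigl => w; rewrite inE.
Qed.

Lemma subseq_consP (x : nat) t s :
  reflect (exists2 i, i < size s & nth 0 s i = x /\ subseq t (drop i.+1 s)) (subseq (x :: t) s).
Proof.
apply: (iffP idP).
  elim: s => [|y s IH] //=; case: eqP => [-> ts|_ /IH[i i_lt [si ts]]].
    by exists 0 => //=; rewrite drop0.
  by exists i.+1.
case=> i; elim: s i => [|y s IH] [|i] //= i_lt [si ts]; first by rewrite si eqxx -[s]drop0.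
case: eqP => _; last exact: IH i_lt (conj si ts).
exact: subseq_trans ts (drop_subseq _ _).
Qed.

Lemma subseq3P (s : seq nat) a b c :
  reflect (exists i j l, [/\ i < j < l, l < size s &
             [/\ nth 0 s i = a, nth 0 s j = b & nth 0 s l = c]])
          (subseq [:: a; b; c] s).
Proof.
apply: (iffP idP).
  case/subseq_consP=> i i_lt [sa /subseq_consP[j + [+ /subseq_consP[l + [+ _]]]]].
  rewrite !size_drop !nth_drop => j_lt sb l_lt sc.
  exists i, (i.+1 + j), ((i.+1 + j).+1 + l); split; try lia.
  by split=> //; rewrite -sc; congr nth; lia.
case=> i [j [l [/andP[ij jl] l_lt [sa sb sc]]]].
apply/subseq_consP; exists i; [lia|split=> //].
apply/subseq_consP; exists (j - i.+1); first by rewrite size_drop; lia.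
rewrite nth_drop; split; first by rewrite -sb; congr nth; lia.
apply/subseq_consP; exists (l - j.+1); first by rewrite drop_drop size_drop; lia.
by rewrite drop_drop nth_drop sub0seq -sc; split=> //; congr nth; lia.
Qed.

Lemma avoids321E n K (w : {ffun 'I_n -> 'I_K}) : avoids321 w = ~~ has321 (wordseq w).
Proof.
apply/forallP/negP => [w_av /has321P[a [b [c [ba cb /subseq3P]]]]|w_av i1].
  case=> i [j [l [/andP[ij jl] l_lt [sa sb sc]]]]; rewrite size_wordseq in l_lt.
  have i_lt : i < n by lia.
  have j_lt : j < n by lia.
  move: (w_av (Ordinal i_lt)) => /forallP/(_ (Ordinal j_lt))/forallP/(_ (Ordinal l_lt)) /=.
  by rewrite -!nth_wordseq /= sa sb sc ij jl ba cb.
apply/forallP => i2; apply/forallP => i3; apply/negP => /and4P[i12 i23 w21 w32].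
apply: w_av; apply/has321P; exists (w i1), (w i2), (w i3); split=> //.
by apply/subseq3P; exists i1, i2, i3; rewrite ?i12 ?i23 ?size_wordseq ?ltn_ord ?nth_wordseq.
Qed.

Definition is_parking_seq n (v : seq nat) : bool :=
  [forall i : 'I_n, nth 0 (sort leq v) i <= i].

Lemma sorted_nth_leqE (s : seq nat) i x : sorted leq s -> i < size s ->
  (nth 0 s i <= x) = (i < count (fun y => y <= x) s).
Proof.
elim: s i => [|y s IH] i //= s_sorted i_lt.
have s_ge_y := order_path_min leq_trans s_sorted.
case: (leqP y x) => [yx|xy].
  by case: i i_lt => [|i] i_lt //=; rewrite IH ?(path_sorted s_sorted).
have -> : count (fun y => y <= x) s = 0.
  apply/eqP; rewrite -leqn0 leqNgt -has_count; apply/hasP => -[z zs zx].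
  by have := allP s_ge_y z zs; lia.
apply/negbTE; rewrite -ltnNge; case: i i_lt => [|i] i_lt //=.
by have := allP s_ge_y _ (mem_nth 0 i_lt); rewrite /=; lia.
Qed.

Lemma sumn_take_content t K v : t <= K ->
  sumn (take t (content 0 K v)) = count (fun x => x < t) v.
Proof. by move=> tK; rewrite /content -map_take take_iota (minn_idPl tK) sumn_content. Qed.

Lemma is_parking_seqE n v : size v = n ->
  is_parking_seq n v = parking_content (content 0 n.+1 v).
Proof.
move=> v_size; rewrite /parking_content size_map size_iota /=.
have nth_sort i : i < n ->
    (nth 0 (sort leq v) i <= i) = (i < sumn (take i.+1 (content 0 n.+1 v))).
  move=> i_lt.
  rewrite sorted_nth_leqE ?sort_sorted ?size_sort ?v_size //; last exact: leq_total.
  rewrite count_sort sumn_take_content; last by rewrite ltnS ltnW.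
  by congr (_ < _); apply: eq_count => x; rewrite /= ltnS.
apply/forallP/allP => [pk i|pk i].
  by rewrite mem_iota => /andP[_ i_lt]; rewrite -nth_sort //; apply: (pk (Ordinal i_lt)).
by rewrite nth_sort //; apply: pk; rewrite mem_iota ltn_ord.
Qed.

Lemma parking_content_bounded n v : 0 < n -> size v = n ->
  parking_content (content 0 n.+1 v) -> all (fun x => x < n) v.
Proof.
move=> n_gt0 v_size /allP/(_ n.-1); rewrite size_map size_iota mem_iota prednK //.
rewrite -/(content 0 n.+1 v) sumn_take_content // => /(_ ltac:(lia)) v_small.
by rewrite all_count eqn_leq count_size v_size.
Qed.

Lemma sum_parking_words n (P : pred (seq nat)) : 0 < n ->
  \sum_(v <- words n n | is_parking_seq n v && P v) 1 =
  \sum_(v <- words n.+1 n | parking_content (content 0 n.+1 v) && P v) 1.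
Proof.
move=> n_gt0; have words_small : perm_eq (words n n)
    (filter (fun v => all (fun x => x < n) v) (words n.+1 n)).
  apply: uniq_perm; [exact: uniq_words|exact/filter_uniq/uniq_words|].
  move=> v; rewrite mem_filter !mem_words; case: (boolP (all _ v)) => [v_small|]; last first.
    by rewrite andbF.
  by rewrite (sub_all _ v_small) ?andbT // => x /ltnW.
rewrite (perm_big _ words_small) big_filter_cond big_seq_cond [RHS]big_seq_cond.
apply: eq_bigl => v; case: (boolP (v \in _)) => //= /words_size v_size.
rewrite is_parking_seqE //; case: (boolP (parking_content _)) => [pk|_]; rewrite ?andbF //=.
by rewrite (parking_content_bounded n_gt0 v_size pk).
Qed.

Theorem theorem3p3 (n : nat) : 0 < n ->
  (n.+1 * #|PF321 n|)%N = w321 n n.+1.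
Proof.
case: n => [|n] // _.
have -> : w321 n.+1 n.+2 =
    \sum_(v <- words n.+2 n.+1 | predT (content 0 n.+2 v) && ~~ has321 v) 1.
  by rewrite -card_ffun_words; apply: eq_card => w; rewrite !inE avoids321E.
rewrite sum_avoiders_by_content (eq_bigl (fun mu => sumn mu == n.+1)) => [|mu]; last first.
  by rewrite andbT.
rewrite (sum_rot_invariant_parking (F := fun mu => ins_seq mu 0)) => [|j mu]; last first.
  by rewrite ins_seq_rot.
congr (_ * _); rewrite -sum_avoiders_by_content -sum_parking_words // -card_ffun_words.
by apply: eq_card => p; rewrite !inE avoids321E.
Qed.
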